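(* Let $G$ be an abelian group and $K=G\oplus G$. Then every uniformly fully inert subgroup of $K$ is commensurable with some fully invariant subgroup of $K$.
   Context: All groups are additively written abelian groups. A subgroup $F$ of $K$ is fully invariant if $\phi(F)\subseteq F$ for every endomorphism $\phi$ of $K$. A subgroup $S$ of $K$ is uniformly fully inert if there is a fixed positive integer $m$ such that $(\phi(S)+S)/S$ has at most $m$ elements for every endomorphism $\phi$ of $K$. Subgroups $B,C$ are commensurable if both $(B+C)/B$ and $(B+C)/C$ are finite. *)

From mathcomp Require Import all_boot all_order all_algebra.
Set Implicit Arguments. Unset Strict Implicit. Unset Printing Implicit Defensive.
Import GRing.Theory.
Local Open Scope ring_scope.

Section AbGroups.
Variable K : zmodType.

Definition is_subgroup (S : K -> Prop) : Prop :=
  S 0 /\ (forall x y, S x -> S y -> S (x - y)).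

Definition is_endo (phi : K -> K) : Prop :=
  forall x y, phi (x + y) = phi x + phi y.

Definition subg_sum (B C : K -> Prop) : K -> Prop :=
  fun x => exists b c, B b /\ C c /\ x = b + c.

Definition subg_image (phi : K -> K) (S : K -> Prop) : K -> Prop :=
  fun x => exists s, S s /\ x = phi s.

(* the quotient A/B (B a subgroup contained in A) has at most m elements:
   there are at most m elements of A whose cosets mod B cover A. *)
Definition quot_card_le (A B : K -> Prop) (m : nat) : Prop :=
  exists r : seq K, (size r <= m)%N /\ (forall y, y \in r -> A y) /\
    forall x, A x -> exists2 y, y \in r & B (x - y).

Definition quot_finite (A B : K -> Prop) : Prop :=
  exists m : nat, quot_card_le A B m.

Definition fully_invariant (F : K -> Prop) : Prop :=
  is_subgroup F /\ forall phi, is_endo phi -> forall x, F x -> F (phi x).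

Definition uniformly_fully_inert (S : K -> Prop) : Prop :=
  is_subgroup S /\ exists m : nat, (0 < m)%N /\
    forall phi, is_endo phi -> quot_card_le (subg_sum (subg_image phi S) S) S m.

Definition commensurable (B C : K -> Prop) : Prop :=
  quot_finite (subg_sum B C) B /\ quot_finite (subg_sum B C) C.

End AbGroups.

From mathcomp Require Import all_boot all_order all_algebra zify boolp.
From Stdlib Require List.
Set Implicit Arguments. Unset Strict Implicit. Unset Printing Implicit Defensive.
Import GRing.Theory.
Local Open Scope ring_scope.

(* Let m bound the quotients (phi(S) + S)/S.  Call d in S orbit-finite when its
   orbit {phi d | phi in End(K)} meets only finitely many cosets of S; these
   elements form a subgroup Sfin. Neumann's lemma on coverings of a group
   by finitely many cosets, applied to the additive group End(K), shows that
   m + 1 elements of S pairwise incongruent modulo Sfin would be separated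
   modulo S by a single endomorphism; hence |S/Sfin| <= m.
   Next pick d_1, d_2, ... in Sfin such that End(K) d_i is not contained in
   P_(i-1) = S + End(K) d_1 + ... + End(K) d_(i-1).  Among r(r+1)/2 proper
   subgroups of a group some element lies outside r of them; for the subgroups
   {phi | phi d_i in P_(i-1)} of a chain of length m(m+1)/2 this yields phi with
   phi d_i outside P_(i-1) for m indices i, and these phi d_i together with 0
   are m + 1 elements of phi(S) pairwise incongruent modulo S, which is
   impossible.  So some chain is maximal: its P contains End(K) Sfin and is
   finite over S, and the largest fully invariant subgroup F inside P satisfies
   S + F <= P and Sfin <= F, so F is commensurable with S. *)

Lemma subrACA (K : zmodType) (a b c e : K) : (a - b) - (c - e) = (a - c) - (b - e).
Proof. by rewrite !opprB addrACA [RHS]addrACA [- b + _]addrC. Qed.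

Section Endomorphisms.
Variable K : zmodType.
Implicit Types f g : K -> K.

Lemma endo0 f : is_endo f -> f 0 = 0.
Proof. by move=> ef; apply/(addIr (f 0)); rewrite -ef !add0r. Qed.

Lemma endoN f : is_endo f -> forall x, f (- x) = - f x.
Proof. by move=> ef x; apply/eqP; rewrite -addr_eq0 -ef addNr endo0. Qed.

Lemma endoB f : is_endo f -> forall x y, f (x - y) = f x - f y.
Proof. by move=> ef x y; rewrite ef endoN. Qed.

Lemma endo_id : is_endo (@id K). Proof. by []. Qed.

Lemma endo_zero : is_endo (fun _ : K => 0). Proof. by move=> x y; rewrite addr0. Qed.

Lemma endo_add f g : is_endo f -> is_endo g -> is_endo (fun x => f x + g x).
Proof. by move=> ef eg x y; rewrite ef eg addrACA. Qed.

Lemma endo_sub f g : is_endo f -> is_endo g -> is_endo (fun x => f x - g x).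
Proof. by move=> ef eg x y; rewrite ef eg opprD addrACA. Qed.

Lemma endo_comp f g : is_endo f -> is_endo g -> is_endo (fun x => f (g x)).
Proof. by move=> ef eg x y; rewrite eg ef. Qed.

End Endomorphisms.

Section Subgroups.
Variables (K : zmodType) (B : K -> Prop).
Hypothesis subB : is_subgroup B.

Lemma subg0 : B 0. Proof. by case: subB. Qed.

Lemma subgB x y : B x -> B y -> B (x - y). Proof. by case: subB => _; apply. Qed.

Lemma subgN x : B x -> B (- x).
Proof. by move=> Bx; rewrite -sub0r; apply: subgB => //; apply: subg0. Qed.

Lemma subgD x y : B x -> B y -> B (x + y).
Proof. by move=> Bx By; rewrite -[y]opprK; apply/subgB/subgN. Qed.

Lemma subg_sym x y : B (x - y) -> B (y - x).
Proof. by move=> Bxy; rewrite -opprB; apply: subgN. Qed.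

Lemma subg_trans y x z : B (x - y) -> B (y - z) -> B (x - z).
Proof. by move=> Bxy Byz; rewrite -(subrKA y); apply: subgD. Qed.

End Subgroups.

Section Incongruence.
Variables (K : zmodType) (B : K -> Prop).
Hypothesis subB : is_subgroup B.

Definition incongruent (l : seq K) :=
  uniq l /\ {in l &, forall x y, B (x - y) -> x = y}.

Lemma incongruent_cons x l :
  (forall y, y \in l -> ~ B (x - y)) -> incongruent l -> incongruent (x :: l).
Proof.
move=> xl [ul inl]; split.
  by rewrite /= ul andbT; apply/negP => /xl; rewrite subrr; apply; apply: subg0.
move=> y z; rewrite !inE => /predU1P[-> | yl] /predU1P[-> | zl] // Byz.
- by case: (xl z zl).
- by case: (xl y yl); apply: subg_sym.
- exact: inl.
Qed.

Lemma incongruent_size_le_cover l R :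
  incongruent l -> (forall x, x \in l -> exists2 r, r \in R & B (x - r)) ->
  (size l <= size R)%N.
Proof.
move=> [ul inl] cov.
pose rep x := nth 0 R (find (fun r => `[< B (x - r) >]) R).
have repP x : x \in l -> rep x \in R /\ B (x - rep x).
  move=> /cov [r rR Br]; have hasR : has (fun r => `[< B (x - r) >]) R.
    by apply/hasP; exists r => //; apply/asboolP.
  split; first by rewrite mem_nth // -has_find.
  by apply/asboolP; exact: (nth_find 0 hasR).
rewrite -(size_map rep); apply: uniq_leq_size.
  rewrite map_inj_in_uniq // => x y xl yl eq_rep; apply: inl => //.
  have [_ Bx] := repP x xl; have [_ By] := repP y yl.
  by apply: (subg_trans subB Bx); rewrite eq_rep; apply: subg_sym.
by move=> _ /mapP [x xl ->]; have [] := repP x xl.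
Qed.

Lemma quot_card_le_of_incongruent A n :
  (forall l, (forall x, x \in l -> A x) -> incongruent l -> (size l <= n)%N) ->
  quot_card_le A B n.
Proof.
move=> bound; apply: contrapT => nq.
suff long k : exists l : seq K,
    [/\ forall x, x \in l -> A x, incongruent l & size l = k].
  by have [l [lA il szl]] := long n.+1; have := bound l lA il; rewrite szl ltnn.
elim: k => [|k [l [lA il szl]]]; first by exists [::].
have [x Ax xl] : exists2 x, A x & forall y, y \in l -> ~ B (x - y).
  apply: contrapT => nx; apply: nq; exists l; split; first exact: bound.
  split => // x Ax; apply: contrapT => nxl; apply: nx; exists x => // y yl Bxy.
  by apply: nxl; exists y.
exists (x :: l); split; [|exact: incongruent_cons|by rewrite /= szl].
by move=> y /predU1P[-> | /lA].
Qed.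

Lemma quot_finite_of_cover A (R : seq K) :
  (forall x, A x -> exists2 r, r \in R & B (x - r)) -> quot_finite A B.
Proof.
move=> cov; exists (size R); apply: quot_card_le_of_incongruent => l lA il.
by apply: incongruent_size_le_cover il _ => x /lA /cov.
Qed.

Lemma incongruent_size_le_quot A m l :
  quot_card_le A B m -> (forall x, x \in l -> A x) -> incongruent l ->
  (size l <= m)%N.
Proof.
move=> [R [szR [_ cov]]] lA il; apply: leq_trans szR.
by apply: incongruent_size_le_cover il _ => x /lA /cov.
Qed.

End Incongruence.

Lemma quot_card_le_sum (K : zmodType) (A B C : K -> Prop) m :
  is_subgroup C -> (forall x, B x -> C x) ->
  quot_card_le A B m -> quot_card_le (subg_sum A C) C m.
Proof.
move=> subC BC [R [szR [RA cov]]]; exists R; split => //; split.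
  by move=> y /RA Ay; exists y, 0; split; [|split; [exact: subg0|rewrite addr0]].
move=> _ [a [c [Aa [Cc ->]]]]; have [r rR Bar] := cov a Aa.
by exists r => //; rewrite addrAC; apply: (subgD subC (BC _ Bar) Cc).
Qed.

Section EndoCore.
Variables (K : zmodType) (P : K -> Prop).

Definition endo_core x := forall f, is_endo f -> P (f x).

Lemma endo_core_sub x : endo_core x -> P x.
Proof. by move/(_ _ (@endo_id K)). Qed.

Lemma endo_core_fully_invariant : is_subgroup P -> fully_invariant endo_core.
Proof.
move=> subP; split; first split.
- by move=> f ef; rewrite endo0 //; apply: subg0.
- by move=> x y Px Py f ef; rewrite endoB //; exact: (subgB subP (Px f ef) (Py f ef)).
by move=> g eg x Px f ef; apply: (Px (fun y => f (g y))); apply: endo_comp.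
Qed.

End EndoCore.

Section Avoidance.
Variable K : zmodType.
Implicit Types (f g : K -> K) (U : (K -> K) -> Prop) (Us : seq ((K -> K) -> Prop)).

Definition endo_subgroup U := forall f g h, is_endo f -> is_endo g ->
  (forall x, h x = f x - g x) -> U f -> U g -> U h.

Definition proper_endo_subgroup U := endo_subgroup U /\ exists2 f, is_endo f & ~ U f.

Definition avoids f U : bool := ~~ `[< U f >].

Lemma count_avoids_filter f g Us :
  (count (avoids g) [seq U <- Us | `[< U f >]] <= count (avoids g) Us)%N.
Proof. by rewrite count_filter; apply: sub_count => U /andP[]. Qed.

Lemma count_avoids_le f g Us : List.Forall (fun U => ~ U f -> ~ U g) Us ->
  (count (avoids f) Us <= count (avoids g) Us)%N.
Proof.
elim=> //= U {}Us fg _ IH; apply: leq_add IH.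
by rewrite /avoids; case: asboolP => Uf; case: asboolP => // Ug; case: fg.
Qed.

Lemma Forall_filter_holds (Q : ((K -> K) -> Prop) -> Prop) f Us :
  List.Forall Q Us ->
  List.Forall (fun U => Q U /\ U f) [seq U <- Us | `[< U f >]].
Proof.
elim=> //= U {}Us QU _ IH; case: asboolP => // Uf.
by apply: List.Forall_cons.
Qed.

Lemma avoid_proper_endo_subgroups r Us :
  List.Forall proper_endo_subgroup Us -> ('C(r.+1, 2) <= size Us)%N ->
  exists2 f, is_endo f & (r <= count (avoids f) Us)%N.
Proof.
elim: r Us => [|r IH] Us; first by move=> _ _; exists id => //; apply: endo_id.
(* Take f1 outside U1.  Unless f1 already avoids r of the others, at least
   'C(r.+1, 2) of them contain f1; an f' avoiding r of those avoids them still
   after adding f1, and one of f', f' + f1 lies outside U1. *)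
case: Us => [|U1 Us]; first by rewrite binS bin1 addnS.
move=> /List.Forall_cons_iff [[subU1 [f1 ef1 nf1]] HUs].
rewrite binS bin1 /= => szUs.
have [many|few] := leqP r (count (avoids f1) Us).
  by exists f1 => //=; rewrite /avoids; case: asboolP.
pose In := [seq U <- Us | `[< U f1 >]].
have szIn : ('C(r.+1, 2) <= size In)%N.
  have : (size In + count (avoids f1) Us)%N = size Us.
    by rewrite size_filter; exact: count_predC.
  lia.
have HIn := Forall_filter_holds f1 HUs.
have [f' ef' cf'] : exists2 f', is_endo f' & (r <= count (avoids f') In)%N.
  by apply: IH szIn; apply: List.Forall_impl HIn => U [].
have cIn g : (count (avoids g) In <= count (avoids g) Us)%N.
  exact: count_avoids_filter.
have [u1|nu1] := pselect (U1 f'); last first.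
  exists f' => //=; rewrite /avoids; case: asboolP => // _.
  by rewrite add1n ltnS; apply: leq_trans cf' (cIn _).
exists (fun x => f' x + f1 x); first exact: endo_add.
rewrite /= {1}/avoids; case: asboolP => [u|_].
  case: nf1; apply: subU1 u u1 => //; first exact: endo_add.
  by move=> x; rewrite [f' x + _]addrC addrK.
rewrite add1n ltnS; apply: leq_trans (cIn _); apply: leq_trans cf' _.
apply: count_avoids_le; apply: List.Forall_impl HIn => U [[subU _] Uf1] nUf' Uf.
apply: nUf'; apply: subU Uf Uf1 => //; first exact: endo_add.
by move=> x; rewrite addrK.
Qed.

End Avoidance.

Section EndomorphismOrbits.
Variables (K : zmodType) (S : K -> Prop).
Hypothesis subS : is_subgroup S.

Definition finite_orbit (d : K) := exists R : seq K,
  forall f, is_endo f -> exists2 r, r \in R & S (f d - r).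

(* Each pair (d, F) in ps stands for the cosets {f | f d - c in S}, c in F, of the
   subgroup {f | f d in S} of End(K); B. Neumann's lemma says that if finitely
   many such cosets cover End(K), one of the subgroups has finite index, i.e.,
   some d has a finite orbit. *)
Definition coset_cover (ps : seq (K * seq K)) := forall f, is_endo f ->
  exists2 p, p \in ps & exists2 c, c \in p.2 & S (f p.1 - c).

Lemma coset_cover_behead d F ps :
  coset_cover ((d, F) :: ps) -> ~ finite_orbit d ->
  exists psi, coset_cover [seq (q.1, q.2 ++ [seq c - psi q.1 | c <- q.2]) | q <- ps].
Proof.
move=> cov nfin.
(* psi moves d off every difference of elements of F, so when f is covered by
   (d, F), f + psi must be covered by a later pair, and then f by its shift. *)
have [psi epsi psiF] : exists2 psi, is_endo psi &
    forall c c', c \in F -> c' \in F -> ~ S (psi d - (c' - c)).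
  apply: contrapT => nopsi; apply: nfin; exists [seq c' - c | c <- F, c' <- F].
  move=> f ef; apply: contrapT => nf; apply: nopsi; exists f => // c c' cF c'F Sf.
  by apply: nf; exists (c' - c) => //; apply: allpairs_f.
exists psi => f ef.
pose shift q := (q.1, q.2 ++ [seq c - psi q.1 | c <- q.2]).
have [p pps [c cp Sc]] := cov f ef; case/predU1P: pps => [ep | pps]; last first.
  by exists (shift p); [apply: map_f | exists c; rewrite // mem_cat cp].
rewrite {}ep /= in cp Sc.
have [q qps [c' cq Sc']] := cov _ (endo_add ef epsi).
case/predU1P: qps => [eq | qps].
  rewrite {}eq /= in cq Sc'; case: (psiF c c' cp cq).
  have -> : psi d - (c' - c) = (f d + psi d - c') - (f d - c).
    rewrite -[f d + psi d - c']addrA [f d + (_ - _)]addrC addrKA.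
    by rewrite opprK addrAC opprB addrA.
  exact: subgB.
exists (shift q); first exact: map_f.
exists (c' - psi q.1); first by rewrite mem_cat (map_f (fun c => c - psi q.1) cq) orbT.
by rewrite /= opprB addrA.
Qed.

Lemma coset_cover_finite_orbit ps :
  coset_cover ps -> exists2 p, p \in ps & finite_orbit p.1.
Proof.
have [n] := ubnP (size ps); elim: n ps => // n IH [|[d F] ps] /= /ltnSE szps cov.
  by have [] := cov _ (@endo_id K).
have [fin|nfin] := pselect (finite_orbit d); first by exists (d, F); rewrite ?mem_head.
have [psi cov'] := coset_cover_behead cov nfin.
have [|_ /mapP [q qps ->] fin] := IH _ _ cov'; first by rewrite size_map.
by exists q; rewrite // inE qps orbT.
Qed.

Definition Sfin x := S x /\ finite_orbit x.

Lemma Sfin_subgroup : is_subgroup Sfin.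
Proof.
split; first split; first exact: subg0.
  exists [:: 0] => f ef; exists 0; rewrite ?mem_head //.
  by rewrite endo0 // subr0; apply: subg0.
move=> x y [Sx [Rx finx]] [Sy [Ry finy]]; split; first exact: subgB.
exists [seq a - b | a <- Rx, b <- Ry] => f ef.
have [a aR Sa] := finx f ef; have [b bR Sb] := finy f ef.
by exists (a - b); [apply: allpairs_f | rewrite endoB // subrACA; apply: subgB].
Qed.

Fixpoint endo_span (ds : seq K) : K -> Prop :=
  if ds is d :: ds' then fun x => exists2 g, is_endo g & endo_span ds' (x - g d)
  else S.

Lemma sub_endo_span ds x : S x -> endo_span ds x.
Proof.
elim: ds x => [|d ds IH] x Sx //=; exists (fun _ => 0); first exact: endo_zero.
by rewrite subr0; apply: IH.
Qed.

Lemma endo_span_subgroup ds : is_subgroup (endo_span ds).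
Proof.
elim: ds => [|d ds IH] //=; split.
  exists (fun _ => 0); first exact: endo_zero.
  by rewrite subr0; exact: (sub_endo_span ds (subg0 subS)).
move=> x y [g eg Pg] [h eh Ph]; exists (fun x => g x - h x); first exact: endo_sub.
by rewrite subrACA; apply: subgB.
Qed.

Lemma endo_span_cons d ds x : endo_span ds x -> endo_span (d :: ds) x.
Proof. by exists (fun _ => 0); [exact: endo_zero | rewrite subr0]. Qed.

Lemma endo_span_head d ds f : is_endo f -> endo_span (d :: ds) (f d).
Proof. by exists f => //; rewrite subrr; exact: (subg0 (endo_span_subgroup ds)). Qed.

Fixpoint strict_chain (ds : seq K) : Prop :=
  if ds is d :: ds' then
    [/\ strict_chain ds', Sfin d & exists2 f, is_endo f & ~ endo_span ds' (f d)]
  else True.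

Fixpoint absorbers (ds : seq K) : seq ((K -> K) -> Prop) :=
  if ds is d :: ds' then (fun f => endo_span ds' (f d)) :: absorbers ds' else [::].

Lemma size_absorbers ds : size (absorbers ds) = size ds.
Proof. by elim: ds => //= d ds ->. Qed.

Lemma absorbers_proper ds :
  strict_chain ds -> List.Forall (@proper_endo_subgroup K) (absorbers ds).
Proof.
elim: ds => [|d ds IH] //= [cds _ [f ef nf]]; apply: List.Forall_cons (IH cds).
split; last by exists f.
move=> g h k eg eh ek Pg Ph.
by rewrite ek; exact: (subgB (endo_span_subgroup ds) Pg Ph).
Qed.

Lemma strict_chain_incongruent ds f : strict_chain ds -> is_endo f ->
  exists l, [/\ size l = (count (avoids f) (absorbers ds)).+1, incongruent S l,
    forall x, x \in l -> endo_span ds x & forall x, x \in l -> subg_image f S x].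
Proof.
move=> + ef; elim: ds => [_|d ds IH /= [cds [Sd _] _]].
  exists [:: 0]; split => //.
  - by split => // x y; rewrite !inE => /eqP -> /eqP ->.
  - by move=> x; rewrite inE => /eqP ->; apply: (subg0 subS).
  - move=> x; rewrite inE => /eqP ->.
    by exists 0; rewrite endo0 //; split; first exact: (subg0 subS).
have [l [szl il spanl fl]] := IH cds.
rewrite /avoids; case: asboolP => [absorbed | escapes] /=.
  by exists l; split => // x /spanl; apply: endo_span_cons.
exists (f d :: l); split => /=; first by rewrite szl.
- apply: incongruent_cons => // y yl Sfy; apply: escapes.
  rewrite -(subrK y (f d)); apply: (subgD (endo_span_subgroup ds)).
    exact: sub_endo_span.
  exact: spanl.
- by move=> x /predU1P[-> | /spanl]; [apply: endo_span_head | apply: endo_span_cons].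
- by move=> x /predU1P[-> | /fl //]; exists d.
Qed.

Lemma endo_span_cover ds : strict_chain ds ->
  exists R : seq K, forall x, endo_span ds x -> exists2 r, r \in R & S (x - r).
Proof.
elim: ds => [|d ds IH] /= => [_ | [cds [_ [Rd fin]] _]].
  by exists [:: 0] => x Sx; exists 0; rewrite ?mem_head ?subr0.
have [R cov] := IH cds; exists [seq a + b | a <- R, b <- Rd] => x [g eg Pg].
have [a aR Sa] := cov _ Pg; have [b bR Sb] := fin g eg.
exists (a + b); first exact: allpairs_f.
have -> : x - (a + b) = (x - g d - a) + (g d - b).
  by rewrite [RHS]addrAC -[x - g d + _]addrA addKr opprD addrA addrAC.
exact: subgD.
Qed.

Section UniformBound.
Variable m : nat.
Hypothesis image_bound : forall f, is_endo f -> forall l,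
  (forall x, x \in l -> subg_image f S x) -> incongruent S l -> (size l <= m)%N.

Lemma incongruent_Sfin_size_le l :
  (forall x, x \in l -> S x) -> incongruent Sfin l -> (size l <= m)%N.
Proof.
move=> lS [ul inl]; case: (leqP (size l) m) => // big; exfalso.
(* Otherwise no f separates l modulo S, so the cosets {f | f (x - y) in S}
   cover End(K) and Neumann's lemma puts some difference x - y into Sfin. *)
pose ps := [seq (x - y, [:: 0 : K]) | x <- l, y <- rem x l].
have cover : coset_cover ps.
  move=> f ef; apply: contrapT => nocov.
  have sep : {in l &, forall x y, S (f x - f y) -> x = y}.
    move=> x y xl yl Sf; apply: contrapT => /eqP xy; apply: nocov.
    exists (x - y, [:: 0]).
      by apply: allpairs_f_dep; rewrite // mem_rem_uniq // !inE eq_sym xy.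
    by exists 0; rewrite ?mem_head //= subr0 endoB.
  have : (size (map f l) <= m)%N.
    apply: (image_bound ef).
      by move=> _ /mapP [x xl ->]; exists x; split => //; apply: lS.
    split.
      rewrite map_inj_in_uniq // => x y xl yl fxy.
      by apply: sep; rewrite // fxy subrr; apply: subg0.
    by move=> _ _ /mapP [x xl ->] /mapP [y yl ->] /(sep x y xl yl) ->.
  by rewrite size_map leqNgt big.
have [_ /allpairsPdep [x [y [xl yl ->]]] /= fin] := coset_cover_finite_orbit cover.
move: yl; rewrite mem_rem_uniq // !inE => /andP [/eqP yx yl]; apply: yx.
by apply/esym/inl => //; split; first exact: (subgB subS (lS x xl) (lS y yl)).
Qed.

Lemma quot_card_le_S_Sfin : quot_card_le S Sfin m.
Proof. exact/(quot_card_le_of_incongruent Sfin_subgroup)/incongruent_Sfin_size_le. Qed.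

Lemma strict_chain_size_lt ds : strict_chain ds -> (size ds < 'C(m.+1, 2))%N.
Proof.
move=> cds; rewrite ltnNge; apply/negP => long.
have [f ef many] : exists2 f, is_endo f & (m <= count (avoids f) (absorbers ds))%N.
  apply: (avoid_proper_endo_subgroups (absorbers_proper cds)).
  by rewrite size_absorbers.
have [l [szl il _ lf]] := strict_chain_incongruent cds ef.
by have := image_bound ef lf il; rewrite szl ltnNge many.
Qed.

Lemma exists_maximal_strict_chain :
  exists ds, strict_chain ds /\ forall d, Sfin d -> endo_core (endo_span ds) d.
Proof.
apply: contrapT => nomax.
have extend ds : strict_chain ds -> exists d, strict_chain (d :: ds).
  move=> cds; apply: contrapT => noext; apply: nomax; exists ds; split => // d Sd f ef.
  by apply: contrapT => nf; apply: noext; exists d; split => //; exists f.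
have long n : exists ds, strict_chain ds /\ size ds = n.
  elim: n => [|n [ds [cds <-]]]; first by exists [::].
  by have [d cd] := extend ds cds; exists (d :: ds).
have [ds [cds szds]] := long 'C(m.+1, 2).
by have := strict_chain_size_lt cds; rewrite szds ltnn.
Qed.

End UniformBound.

End EndomorphismOrbits.

Theorem uniformly_fully_inert_commensurable (K : zmodType) (S : K -> Prop) :
  uniformly_fully_inert S ->
  exists F : K -> Prop, fully_invariant F /\ commensurable S F.
Proof.
case=> subS [m [_ quotS]].
have image_bound f : is_endo f -> forall l,
    (forall x, x \in l -> subg_image f S x) -> incongruent S l -> (size l <= m)%N.
  move=> ef l lf; apply: (incongruent_size_le_quot subS (quotS f ef)) => x /lf fx.
  by exists x, 0; split => //; split; [exact: subg0 | rewrite addr0].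
have [ds [cds Sfin_core]] := exists_maximal_strict_chain subS image_bound.
have [R coverR] := endo_span_cover subS cds.
have subP := endo_span_subgroup subS ds.
have fiF := endo_core_fully_invariant subP.
exists (endo_core (endo_span S ds)); split => //; split.
  apply: (quot_finite_of_cover subS (R := R)) => _ [b [c [Sb [Fc ->]]]].
  by apply/coverR/(subgD subP); [apply: sub_endo_span | apply: endo_core_sub].
exists m; apply: (quot_card_le_sum fiF.1 Sfin_core).
exact: (quot_card_le_S_Sfin subS image_bound).
Qed.

Theorem proposition2p2 (G : zmodType) (S : (G * G)%type -> Prop) :
  uniformly_fully_inert S ->
  exists F : (G * G)%type -> Prop, fully_invariant F /\ commensurable S F.
Proof. exact: uniformly_fully_inert_commensurable. Qed.
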